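(* Let $\mathcal P$ be a CPOS $2n$-gon and $i$ an index. Suppose the line through $P_i$ and $N(i+\tfrac12)$ meets the line $P_{n+i}P_{n+i+1}$ at a point $P_i'$ belonging to the segment $[P_{n+i},P_{n+i+1}]$. Then $N(i+\tfrac12)$ is the midpoint of the chord $P_iP_i'$, and this chord divides the region bounded by $\mathcal P$ into two regions of equal area.
   Context: A CPOS $2n$-gon ($n\ge2$) is a closed planar polygon $\mathcal P$ with vertices $P_1,\dots,P_{2n}$ (indices mod $2n$) bounding a convex region, with no two adjacent sides parallel, with $P_{i+n+1}-P_{i+n}$ parallel to $P_{i+1}-P_i$ for all $i$, and positively oriented: $[P_{i+1}-P_i,P_{j+1}-P_j]>0$ for $1\le i<j\le n$ ($[\cdot,\cdot]$ = determinant). $M_i=\tfrac12(P_i+P_{i+n})$; the mid-parallel line $m(i+\tfrac12)$ is the line through $M_i$ parallel to $P_{i+1}-P_i$. $A_i^+$ is the area of the polygon $P_iP_{i+1}\cdots P_{i+n}$ and $A_i^-$ the area of the polygon $P_{i+n}P_{i+n+1}\cdots P_{i+2n}$. $N(i+\tfrac12)$ is the unique point of $m(i+\tfrac12)$ with $[N(i+\tfrac12)-M_i,\,P_{i+n}-P_i]=\tfrac12(A_i^+-A_i^-)$. *)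

From HB Require Import structures.
From mathcomp Require Import all_boot all_order all_algebra.
Set Implicit Arguments. Unset Strict Implicit. Unset Printing Implicit Defensive.
Import Order.TTheory GRing.Theory Num.Theory.
Local Open Scope ring_scope.

Section Plane.
Variable R : realFieldType.
Local Notation pt := (R * R)%type.

Definition cross (p q : pt) : R := p.1 * q.2 - p.2 * q.1.
Definition padd (p q : pt) : pt := (p.1 + q.1, p.2 + q.2).
Definition psub (p q : pt) : pt := (p.1 - q.1, p.2 - q.2).
Definition pscale (a : R) (p : pt) : pt := (a * p.1, a * p.2).

(* area of the closed polygon with vertex list s (shoelace formula) *)
Definition polyArea (s : seq pt) : R :=
  (\sum_(pq <- zip s (rot 1 s)) cross pq.1 pq.2) / 2%:R.

(* polygon given by P : nat -> pt, indices taken mod 2n *)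
Definition edge (P : nat -> pt) (k : nat) : pt := psub (P k.+1) (P k).

Definition is_CPOS (n : nat) (P : nat -> pt) : Prop :=
  (2 <= n)%N /\ (forall k, P (k + 2 * n)%N = P k) /\
  [/\
      (* bounds a convex region: every vertex lies weakly left of every side *)
      (forall k j, 0 <= cross (edge P k) (psub (P j) (P k))),
      (forall k, cross (edge P k) (edge P k.+1) != 0),
      (forall k, cross (edge P (k + n)%N) (edge P k) = 0) &
      (* positive orientation *)
      (forall k j, (1 <= k)%N -> (k < j)%N -> (j <= n)%N ->
         0 < cross (edge P k) (edge P j))].

Definition midM (n : nat) (P : nat -> pt) (i : nat) : pt :=
  pscale (1 / 2%:R) (padd (P i) (P (i + n)%N)).

Definition Aplus (n : nat) (P : nat -> pt) (i : nat) : R :=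
  polyArea [seq P k | k <- iota i n.+1].
Definition Aminus (n : nat) (P : nat -> pt) (i : nat) : R :=
  polyArea [seq P k | k <- iota (i + n) n.+1].

(* N is the point N(i+1/2): on the mid-parallel line m(i+1/2), with the
   prescribed determinant *)
Definition is_N (n : nat) (P : nat -> pt) (i : nat) (N : pt) : Prop :=
  (exists t : R, N = padd (midM n P i) (pscale t (edge P i))) /\
  cross (psub N (midM n P i)) (psub (P (i + n)%N) (P i))
    = (Aplus n P i - Aminus n P i) / 2%:R.

End Plane.

(* Write A = P_i, Q = P_{i+n} and a = P_{i+1} - P_i.  The point N lies on the
   mid-parallel through (A + Q)/2 with direction a, and P' lies on the line AN
   and, opposite sides being parallel, on the line through Q parallel to a.
   Computing [a, P' - A] in these two ways forces P' = A + 2 (N - A), i.e. N is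
   the midpoint of AP', provided c = [a, Q - A] is nonzero (chord_midpoint).
   That c never vanishes is the geometric core: by strong induction on
   i = 1..n, P_{i+n} lies strictly left of side i, because the sides
   i, ..., i+n-1 all turn weakly left of side i (those past P_n being
   antiparallel to earlier ones); periodicity extends this to every i.

   For the areas, the shoelace formula shows that appending P' to the path
   P_i, ..., P_{i+n} adds the triangle (A, Q, P'), while replacing Q by P' in
   Q, P_{i+n+1}, ..., P_{i+2n} removes it (the triangle Q P' P_{i+n+1} is flat).
   The defining determinant of N, with N the midpoint of AP', says that this
   triangle has area (A^- - A^+)/2, so both pieces have area (A^+ + A^-)/2. *)

From HB Require Import structures.
From mathcomp Require Import all_boot all_order all_algebra.
From mathcomp Require Import ring lra zify.
Set Implicit Arguments. Unset Strict Implicit. Unset Printing Implicit Defensive.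
Import Order.TTheory GRing.Theory Num.Theory.
Local Open Scope ring_scope.

Section PlaneAlgebra.
Variable R : realFieldType.
Implicit Types (a b x y A Q X N : R * R).

Lemma crossC a b : cross a b = - cross b a.
Proof. by rewrite /cross; ring. Qed.

Lemma cross_psubC a x y : cross a (psub x y) = - cross a (psub y x).
Proof. by rewrite /cross /psub /=; ring. Qed.

Lemma cross_psub_sum (P : nat -> R * R) a i m :
  cross a (psub (P (i + m)%N) (P i)) = \sum_(j < m) cross a (edge P (i + j)).
Proof.
elim: m => [|m IH]; first by rewrite big_ord0 addn0 /cross /psub /=; ring.
by rewrite big_ord_recr /= -IH /cross /psub /edge addnS /=; ring.
Qed.

(* Pluecker-type identity: cross a x * cross b y - cross b x * cross a y
   equals cross a b * cross x y, so it vanishes when a and b are parallel. *)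
Lemma parallel_cross_mul a b x y : cross a b = 0 ->
  cross a x * cross b y = cross b x * cross a y.
Proof.
move=> ab0; apply/eqP; rewrite -subr_eq0; apply/eqP.
have -> : cross a x * cross b y - cross b x * cross a y = cross a b * cross x y
  by rewrite /cross; ring.
by rewrite ab0 mul0r.
Qed.

Lemma chord_midpoint a A Q N X t u :
  cross a (psub Q A) != 0 ->
  N = padd (pscale (1 / 2%:R) (padd A Q)) (pscale t a) ->
  X = padd A (pscale u (psub N A)) ->
  cross a (psub X Q) = 0 ->
  N = pscale (1 / 2%:R) (padd A X).
Proof.
move=> c0 eN eX XQ.
have u2 : u = 2%:R.
  have along_AN : cross a (psub X A) = u * cross a (psub Q A) / 2%:R.
    by rewrite eX eN /cross /psub /padd /pscale /=; field.
  have across : cross a (psub X A) = cross a (psub Q A).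
    by move: XQ; rewrite /cross /psub /= => XQ; lra.
  apply: (mulIf c0); move: along_AN; rewrite across; lra.
case: N eN eX => N1 N2 _ ->.
by rewrite u2 /pscale /padd /psub /=; congr pair; field.
Qed.

Lemma midpoint_cross A Q X :
  cross (psub (pscale (1 / 2%:R) (padd A X)) (pscale (1 / 2%:R) (padd A Q)))
        (psub Q A)
  = cross (psub X A) (psub Q A) / 2%:R.
Proof. by rewrite /cross /psub /padd /pscale /=; field. Qed.

End PlaneAlgebra.

Section Shoelace.
Variable R : realFieldType.
Implicit Types (A B L X Q : R * R) (s : seq (R * R)).

Fixpoint pathCross (x : R * R) (s : seq (R * R)) : R :=
  if s is y :: s' then cross x y + pathCross y s' else 0.

Lemma pathCross_rcons x s y :
  pathCross x (rcons s y) = pathCross x s + cross (last x s) y.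
Proof. by elim: s x => [|z s IH] x /=; rewrite ?IH ?addr0 ?add0r ?addrA. Qed.

Lemma polyArea_cons x s :
  polyArea (x :: s) = (pathCross x s + cross (last x s) x) / 2%:R.
Proof.
rewrite /polyArea rot1_cons; congr (_ / _); move: {2 5}x => y.
elim: s x => [|z s IH] x /=; first by rewrite big_cons big_nil addr0 add0r.
by rewrite big_cons IH addrA.
Qed.

Lemma triangle_area A B L :
  polyArea [:: A; B; L] = cross (psub B A) (psub L A) / 2%:R.
Proof. by rewrite polyArea_cons /= /cross /psub /=; field. Qed.

Lemma polyArea_rcons s X :
  polyArea (rcons s X) = polyArea s + polyArea [:: head X s; last X s; X].
Proof.
case: s => [|A s].
  by rewrite triangle_area /polyArea /= big_cons !big_nil /cross /psub /=; field.
rewrite /= -rcons_cons !polyArea_cons pathCross_rcons last_rcons /=.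
by rewrite /cross /psub /=; field.
Qed.

Lemma polyArea_move_head Q X s :
  polyArea (X :: s) = polyArea (Q :: s)
    + polyArea [:: Q; X; head Q s] + polyArea [:: last Q s; X; Q].
Proof.
rewrite !triangle_area !polyArea_cons.
case: s => [|B s] /=; first by rewrite /cross /psub /=; field.
by rewrite /cross /psub /=; field.
Qed.

Lemma collinear_triangle_area Q L (r : R) :
  polyArea [:: Q; padd (pscale (1 - r) Q) (pscale r L); L] = 0.
Proof. by rewrite triangle_area /cross /psub /padd /pscale /=; field. Qed.

End Shoelace.

Lemma last_map_iota (T : Type) (P : nat -> T) a m :
  last (P a) [seq P k | k <- iota a.+1 m] = P (a + m)%N.
Proof. by elim: m a => [|m IH] a; rewrite ?addn0 //= IH addSnnS. Qed.

Lemma periodic_rep (T : Type) (g : nat -> T) (m : nat) :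
  (0 < m)%N -> (forall k, g (k + m)%N = g k) ->
  forall i, exists2 j, (1 <= j <= m)%N & g i = g j.
Proof.
move=> m_gt0 gper; elim/ltn_ind => i IH.
case: (posnP i) => [-> | i_gt0]; first by exists m; rewrite ?m_gt0 ?leqnn // -gper.
case: (leqP i m) => [i_le | m_lt]; first by exists i => //; apply/andP.
have [j j_range gj] := IH (i - m)%N ltac:(lia).
by exists j => //; rewrite -gj -[g (i - m)%N]gper subnK // ltnW.
Qed.

Section CPOS.
Variables (R : realFieldType) (n : nat) (P : nat -> R * R).
Hypothesis cposP : is_CPOS n P.

Lemma cpos_ge2 : (2 <= n)%N.
Proof. by case: cposP. Qed.

Lemma cpos_periodic k : P (k + 2 * n)%N = P k.
Proof. by case: cposP => _ [per _]; apply: per. Qed.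

Lemma cpos_convex k j : 0 <= cross (edge P k) (psub (P j) (P k)).
Proof. by case: cposP => _ [_ [convex _ _ _]]; apply: convex. Qed.

Lemma cpos_adjacent k : cross (edge P k) (edge P k.+1) != 0.
Proof. by case: cposP => _ [_ [_ adjacent _ _]]; apply: adjacent. Qed.

Lemma cpos_opposite k : cross (edge P (k + n)) (edge P k) = 0.
Proof. by case: cposP => _ [_ [_ _ opposite _]]; apply: opposite. Qed.

Lemma cpos_oriented k j : (1 <= k)%N -> (k < j)%N -> (j <= n)%N ->
  0 < cross (edge P k) (edge P j).
Proof. by case: cposP => _ [_ [_ _ _ oriented]]; apply: oriented. Qed.

Definition diagCross (i : nat) : R := cross (edge P i) (psub (P (i + n)%N) (P i)).

(* For a side i in the first half, every later side of the half-turn from i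
   turns weakly left of it; for the sides past P_n this uses that side k + n is
   antiparallel to side k, which is known once P_{k+n} lies strictly left of
   side k (for all earlier k). *)
Lemma side_turn_nonneg i j :
  (forall k, (1 <= k < i)%N -> 0 < diagCross k) -> (1 <= i <= n)%N -> (j < n)%N ->
  0 <= cross (edge P i) (edge P (i + j)).
Proof.
move=> diag_pos /andP[i_ge1 i_le] j_lt.
case: (leqP (i + j) n) => [ij_le | n_lt].
  case: j ij_le {j_lt} => [|j] ij_le; first by rewrite addn0 /cross mulrC subrr.
  by apply/ltW/cpos_oriented => //; lia.
pose k := (i + j - n)%N.
have -> : (i + j = k + n)%N by rewrite /k; lia.
have diag_k : 0 < diagCross k by apply: diag_pos; rewrite /k; lia.
have turn_ki : 0 < cross (edge P k) (edge P i) by apply: cpos_oriented; rewrite /k; lia.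
have back_k : cross (edge P (k + n)) (psub (P (k + n)%N) (P k)) <= 0.
  by rewrite cross_psubC oppr_le0 cpos_convex.
rewrite crossC oppr_ge0 -(pmulr_lle0 _ diag_k) /diagCross.
rewrite (parallel_cross_mul _ _ (cpos_opposite k)).
exact: mulr_ge0_le0 (ltW turn_ki) back_k.
Qed.

Lemma diagCross_pos i : (1 <= i <= n)%N -> 0 < diagCross i.
Proof.
elim/ltn_ind: i => i IH i_range.
have turn j : (j < n)%N -> 0 <= cross (edge P i) (edge P (i + j)).
  by apply: side_turn_nonneg => // k /andP[k_ge1 k_lt]; apply: IH; lia.
have n_gt1 : (1 < n)%N := cpos_ge2.
rewrite /diagCross cross_psub_sum (bigD1 (Ordinal n_gt1)) //=.
have first_turn : 0 < cross (edge P i) (edge P (i + 1)).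
  by rewrite lt0r addn1 cpos_adjacent -addn1 turn.
by apply: ltr_wpDr => //; apply: sumr_ge0 => j _; apply: turn.
Qed.

Lemma diagCross_periodic k : diagCross (k + 2 * n) = diagCross k.
Proof.
rewrite /diagCross /edge -addSn !cpos_periodic.
by rewrite addnAC cpos_periodic.
Qed.

(* The opposite vertex never lies on the line of a side: reduce to 1 <= i <= 2n;
   for i = k + n, a zero value would make side k + n parallel both to side k
   and to the diagonal P_k P_{k+n}, which are not parallel, so side k + n
   would be degenerate, contradicting non-parallel adjacent sides. *)
Lemma diagCross_neq0 i : diagCross i != 0.
Proof.
have n_gt0 : (0 < 2 * n)%N by have := cpos_ge2; lia.
have [j /andP[j_ge1 j_le] ->] := periodic_rep n_gt0 diagCross_periodic i.
case: (leqP j n) => [j_le_n | n_lt_j]; first by rewrite gt_eqF ?diagCross_pos ?j_ge1.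
pose k := (j - n)%N.
have -> : j = (k + n)%N by rewrite /k; lia.
have diag_k : diagCross k != 0 by rewrite gt_eqF // diagCross_pos //; rewrite /k; lia.
apply/eqP; rewrite /diagCross -addnA addnn -mul2n cpos_periodic => diag0.
have := parallel_cross_mul (psub (P k) (P (k + n)%N)) (edge P (k + n).+1)
  (cpos_opposite k).
rewrite diag0 mul0r cross_psubC -/(diagCross k) => /esym/eqP.
by rewrite mulf_eq0 oppr_eq0 (negbTE diag_k) (negbTE (cpos_adjacent _)).
Qed.
End CPOS.

Theorem mainTheorem10 (R : realFieldType) (n : nat) (P : nat -> R * R)
    (i : nat) (N P' : R * R) :
  is_CPOS n P ->
  is_N n P i N ->
  (* P' lies on the line through P_i and N *)
  (exists u : R, P' = padd (P i) (pscale u (psub N (P i)))) ->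
  (* P' lies on the segment [P_{n+i}, P_{n+i+1}] *)
  (exists2 s : R, 0 <= s <= 1 &
     P' = padd (pscale (1 - s) (P (n + i)%N)) (pscale s (P (n + i).+1))) ->
  N = pscale (1 / 2%:R) (padd (P i) P') /\
  polyArea (rcons [seq P k | k <- iota i n.+1] P')
    = polyArea (P' :: [seq P k | k <- iota (n + i).+1 n]).
Proof.
move=> cposP [[t eN] N_cross] [u eP'] [s _ eP'seg].
rewrite [(n + i)%N]addnC in eP'seg *.
have P'_on_opposite_line : cross (edge P i) (psub P' (P (i + n)%N)) = 0.
  have -> : cross (edge P i) (psub P' (P (i + n)%N))
            = - s * cross (edge P (i + n)) (edge P i).
    by rewrite eP'seg /cross /psub /padd /pscale /edge /=; ring.
  by rewrite (cpos_opposite cposP) mulr0.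
have midN := chord_midpoint (diagCross_neq0 cposP i) eN eP' P'_on_opposite_line.
split=> //.
have n_gt0 : (0 < n)%N by have := cpos_ge2 cposP; lia.
have far_side_flat : polyArea [:: P (i + n)%N; P'; P (i + n).+1] = 0.
  by rewrite eP'seg collinear_triangle_area.
have last_far : last (P (i + n)%N) [seq P k | k <- iota (i + n).+1 n] = P i.
  by rewrite last_map_iota -addnA addnn -mul2n cpos_periodic.
have head_far : head (P (i + n)%N) [seq P k | k <- iota (i + n).+1 n] = P (i + n).+1.
  by case: (n) n_gt0.
rewrite polyArea_rcons [RHS](polyArea_move_head (P (i + n)%N)).
rewrite head_far last_far far_side_flat addr0 [head _ _]/= [last _ _]/= last_map_iota.
rewrite -/(Aplus n P i) -/(Aminus n P i) !triangle_area [cross (psub P' _) _]crossC.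
move: N_cross; rewrite midN /midM midpoint_cross crossC.
lra.
Qed.
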